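(* Let $(X,d)$ be a compact metric space and $f:X\to X$ continuous. Then the relation $\sim$ on $CR(f)$ is an equivalence relation, the set $R=\{(x,y)\in CR(f)^2: x\sim y\}$ is closed in $CR(f)^2$, and $(f\times f)(R)\subset R$.
   Context: For $\delta>0$, a finite sequence $(x_i)_{i=0}^k$ ($k\ge1$) is a $\delta$-chain of $f$ if $d(f(x_i),x_{i+1})\le\delta$ for $0\le i\le k-1$; it is a $\delta$-cycle if moreover $x_0=x_k$. $CR(f)$ is the set of chain recurrent points: $x\in CR(f)$ iff for every $\delta>0$ there is a $\delta$-cycle $(x_i)_{i=0}^k$ with $x_0=x_k=x$. For $x,y\in CR(f)$, $x\sim y$ iff for every $\delta>0$ there are integers $m>0$, $N>0$ such that for every integer $n\ge N$ there are $\delta$-chains $(x_i)_{i=0}^{mn},(y_i)_{i=0}^{mn}$ of $f$ consisting of points of $CR(f)$ with $x_0=y_{mn}=x$ and $x_{mn}=y_0=y$. *)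

From Stdlib Require Import Reals Lra Lia List.
Open Scope R_scope.

Definition is_metric {X : Type} (d : X -> X -> R) : Prop :=
  (forall x y, 0 <= d x y) /\
  (forall x y, d x y = 0 <-> x = y) /\
  (forall x y, d x y = d y x) /\
  (forall x y z, d x z <= d x y + d y z).

Definition is_open {X : Type} (d : X -> X -> R) (U : X -> Prop) : Prop :=
  forall x, U x -> exists r, 0 < r /\ forall y, d x y < r -> U y.

Definition is_compact {X : Type} (d : X -> X -> R) : Prop :=
  forall (I : Type) (U : I -> X -> Prop),
    (forall i, is_open d (U i)) ->
    (forall x, exists i, U i x) ->
    exists l : list I, forall x, exists i, In i l /\ U i x.

Definition is_continuous {X : Type} (d : X -> X -> R) (f : X -> X) : Prop :=
  forall x eps, 0 < eps -> exists delta, 0 < delta /\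
    forall y, d x y < delta -> d (f x) (f y) < eps.

(* (xs i)_{i=0}^k is a delta-chain of f (the length k >= 1 is required
   separately where chains are used) *)
Definition delta_chain {X : Type} (d : X -> X -> R) (f : X -> X)
    (delta : R) (k : nat) (xs : nat -> X) : Prop :=
  forall i, (i < k)%nat -> d (f (xs i)) (xs (S i)) <= delta.

Definition CR {X : Type} (d : X -> X -> R) (f : X -> X) (x : X) : Prop :=
  forall delta, 0 < delta -> exists (k : nat) (xs : nat -> X),
    (1 <= k)%nat /\ delta_chain d f delta k xs /\ xs 0%nat = x /\ xs k = x.

Definition sim {X : Type} (d : X -> X -> R) (f : X -> X) (x y : X) : Prop :=
  CR d f x /\ CR d f y /\
  forall delta, 0 < delta -> exists m N : nat, (0 < m)%nat /\ (0 < N)%nat /\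
    forall n : nat, (N <= n)%nat ->
      exists xs ys : nat -> X,
        delta_chain d f delta (m * n) xs /\ delta_chain d f delta (m * n) ys /\
        (forall i, (i <= m * n)%nat -> CR d f (xs i)) /\
        (forall i, (i <= m * n)%nat -> CR d f (ys i)) /\
        xs 0%nat = x /\ ys (m * n)%nat = x /\ xs (m * n)%nat = y /\ ys 0%nat = y.

From Stdlib Require Import Reals Lra Lia List Classical IndefiniteDescription.
Open Scope R_scope.

(* Reflexivity is the substantial part: points of CR(f) need not be joined to themselves by
   chains inside CR(f). But every point of a fine cycle through x is chain-linked to x, and by
   compactness it lies close to a point of the chain class of x, which is contained in CR(f);
   moving all points of the cycle there (continuity controls the jumps) yields a cycle in CR(f),
   repeated n times for the chains of length k n. Transitivity glues chains, closedness reroutes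
   the end points of chains between nearby pairs, and f-invariance drops the first step of a
   chain, replacing the new first point by its image. *)

Lemma finite_min_pos {A : Type} (g : A -> R) (l : list A) (c : R) :
  0 < c -> (forall a, 0 < g a) ->
  exists m, 0 < m /\ m <= c /\ forall a, In a l -> m <= g a.
Proof.
  intros Hc Hg. induction l as [|b l [m [Hm [Hmc Hml]]]].
  - exists c. repeat split; [exact Hc | lra | intros a []].
  - exists (Rmin (g b) m). pose proof (Rmin_l (g b) m). pose proof (Rmin_r (g b) m).
    repeat split; [apply Rmin_pos; auto | lra |].
    intros a [<- | Ha]; [lra | specialize (Hml a Ha); lra].
Qed.

Section ChainRecurrence.

Variables (X : Type) (d : X -> X -> R) (f : X -> X).
Hypothesis Hd : is_metric d.
Hypothesis Hf : is_continuous d f.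
Hypothesis Hcpt : is_compact d.

Lemma dist_nonneg x y : 0 <= d x y.
Proof. apply Hd. Qed.

Lemma dist_refl x : d x x = 0.
Proof. apply Hd. reflexivity. Qed.

Lemma dist_sym x y : d x y = d y x.
Proof. apply Hd. Qed.

Lemma dist_triangle x y z : d x z <= d x y + d y z.
Proof. apply Hd. Qed.

Lemma delta_chain_mono e1 e2 k xs :
  e1 <= e2 -> delta_chain d f e1 k xs -> delta_chain d f e2 k xs.
Proof. intros He Hc i Hi. specialize (Hc i Hi). lra. Qed.


Definition chain_cat (k : nat) (xs ys : nat -> X) : nat -> X :=
  fun i => if Nat.leb i k then xs i else ys (i - k)%nat.

Lemma chain_cat_l k xs ys i : (i <= k)%nat -> chain_cat k xs ys i = xs i.
Proof. intros Hi. unfold chain_cat. destruct (Nat.leb_spec i k); [reflexivity | lia]. Qed.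

Lemma chain_cat_r k xs ys i : (k < i)%nat -> chain_cat k xs ys i = ys (i - k)%nat.
Proof. intros Hi. unfold chain_cat. destruct (Nat.leb_spec i k); [lia | reflexivity]. Qed.

Lemma chain_cat_end k1 k2 xs ys :
  xs k1 = ys 0%nat -> chain_cat k1 xs ys (k1 + k2) = ys k2.
Proof.
  intros Hjoin. destruct k2 as [|k2].
  - rewrite chain_cat_l, Nat.add_0_r by lia. exact Hjoin.
  - rewrite chain_cat_r by lia. f_equal. lia.
Qed.

Lemma delta_chain_cat e k1 k2 xs ys :
  delta_chain d f e k1 xs -> delta_chain d f e k2 ys -> xs k1 = ys 0%nat ->
  delta_chain d f e (k1 + k2) (chain_cat k1 xs ys).
Proof.
  intros Hxs Hys Hjoin i Hi.
  destruct (Nat.lt_trichotomy i k1) as [Hlt | [-> | Hgt]].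
  - rewrite !chain_cat_l by lia. apply Hxs. exact Hlt.
  - rewrite chain_cat_l, chain_cat_r, Nat.sub_succ_l, Nat.sub_diag, Hjoin by lia.
    apply (Hys 0%nat). lia.
  - rewrite !chain_cat_r, Nat.sub_succ_l by lia. apply Hys. lia.
Qed.

Lemma delta_chain_perturb e1 e e2 k xs ys :
  delta_chain d f e k xs ->
  (forall i, (i < k)%nat -> d (f (ys i)) (f (xs i)) <= e1) ->
  (forall i, (0 < i <= k)%nat -> d (xs i) (ys i) <= e2) ->
  delta_chain d f (e1 + e + e2) k ys.
Proof.
  intros Hxs Hf1 Hd2 i Hi.
  pose proof (Hxs i Hi). pose proof (Hf1 i Hi). pose proof (Hd2 (S i) ltac:(lia)).
  pose proof (dist_triangle (f (ys i)) (f (xs i)) (ys (S i))).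
  pose proof (dist_triangle (f (xs i)) (xs (S i)) (ys (S i))).
  lra.
Qed.

Definition reroute (k : nat) (a b : X) (xs : nat -> X) : nat -> X :=
  fun i => if Nat.eqb i 0 then a else if Nat.eqb i k then b else xs i.

Lemma reroute_0 k a b xs : reroute k a b xs 0%nat = a.
Proof. reflexivity. Qed.

Lemma reroute_end k a b xs : (1 <= k)%nat -> reroute k a b xs k = b.
Proof.
  intros Hk. unfold reroute. destruct (Nat.eqb_spec k 0); [lia |]. now rewrite Nat.eqb_refl.
Qed.

Lemma reroute_mid k a b xs i : i <> 0%nat -> i <> k -> reroute k a b xs i = xs i.
Proof.
  intros Hi0 Hik. unfold reroute.
  destruct (Nat.eqb_spec i 0); [lia |]. destruct (Nat.eqb_spec i k); [lia | reflexivity].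
Qed.

Lemma delta_chain_reroute e1 e e2 k a b xs :
  (1 <= k)%nat -> delta_chain d f e k xs ->
  d (f a) (f (xs 0%nat)) <= e1 -> d (xs k) b <= e2 ->
  delta_chain d f (e1 + e + e2) k (reroute k a b xs).
Proof.
  intros Hk Hxs Ha Hb.
  pose proof (dist_nonneg (f a) (f (xs 0%nat))). pose proof (dist_nonneg (xs k) b).
  apply delta_chain_perturb with xs; [exact Hxs | |].
  - intros i Hi. destruct (Nat.eq_dec i 0) as [-> | Hi0]; [exact Ha |].
    rewrite reroute_mid, dist_refl by lia. lra.
  - intros i Hi. destruct (Nat.eq_dec i k) as [-> | Hik]; [rewrite reroute_end; auto |].
    rewrite reroute_mid, dist_refl by lia. lra.
Qed.

Definition reaches (e : R) (a b : X) : Prop :=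
  exists k xs, (1 <= k)%nat /\ delta_chain d f e k xs /\ xs 0%nat = a /\ xs k = b.

Lemma reaches_mono e1 e2 a b : e1 <= e2 -> reaches e1 a b -> reaches e2 a b.
Proof.
  intros He (k & xs & Hk & Hxs & H0 & Hend).
  exists k, xs. repeat split; auto. eapply delta_chain_mono; eauto.
Qed.

Lemma reaches_trans e a b c : reaches e a b -> reaches e b c -> reaches e a c.
Proof.
  intros (k1 & xs & Hk1 & Hxs & Hx0 & Hxend) (k2 & ys & Hk2 & Hys & Hy0 & Hyend).
  exists (k1 + k2)%nat, (chain_cat k1 xs ys). repeat split.
  - lia.
  - apply delta_chain_cat; [assumption | assumption | congruence].
  - rewrite chain_cat_l by lia. exact Hx0.
  - rewrite chain_cat_end by congruence. exact Hyend.
Qed.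

Lemma reaches_reroute e1 e e2 a b a' b' :
  reaches e a b -> d (f a') (f a) <= e1 -> d b b' <= e2 -> reaches (e1 + e + e2) a' b'.
Proof.
  intros (k & xs & Hk & Hxs & H0 & Hend) Ha Hb.
  subst a b. exists k, (reroute k a' b' xs). repeat split; auto using reroute_end.
  apply delta_chain_reroute; assumption.
Qed.

Lemma reaches_from_chain e k xs i :
  delta_chain d f e k xs -> (1 <= i <= k)%nat -> reaches e (xs 0%nat) (xs i).
Proof.
  intros Hxs Hi. exists i, xs. repeat split; try lia.
  intros j Hj. apply Hxs. lia.
Qed.

Lemma reaches_along_chain e k xs i :
  delta_chain d f e k xs -> (i < k)%nat -> reaches e (xs i) (xs k).
Proof.
  intros Hxs Hi. exists (k - i)%nat, (fun j => xs (i + j)%nat). repeat split.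
  - lia.
  - intros j Hj. rewrite Nat.add_succ_r. apply Hxs. lia.
  - now rewrite Nat.add_0_r.
  - f_equal. lia.
Qed.

Definition linked (e : R) (x w : X) : Prop := reaches e x w /\ reaches e w x.

Definition chain_equiv (x w : X) : Prop := forall e, 0 < e -> linked e x w.

Lemma linked_mono e1 e2 x w : e1 <= e2 -> linked e1 x w -> linked e2 x w.
Proof. intros He [Hto Hfrom]. split; eapply reaches_mono; eauto. Qed.

Lemma chain_equiv_CR x w : chain_equiv x w -> CR d f w.
Proof. intros Hxw e He. destruct (Hxw e He). eapply reaches_trans; eauto. Qed.

Lemma linked_stable w e : 0 < e -> exists r, 0 < r /\
  forall x w', d w w' < r -> linked r x w' -> linked e x w.
Proof.
  intros He. destruct (Hf w (e / 2)) as (eta & Heta & Hcont); [lra |].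
  pose proof (Rmin_l eta (e / 2)). pose proof (Rmin_r eta (e / 2)).
  exists (Rmin eta (e / 2)). split; [apply Rmin_pos; lra |].
  intros x w' Hww' [Hto Hfrom]. split.
  - apply reaches_mono with (0 + Rmin eta (e / 2) + Rmin eta (e / 2)); [lra |].
    apply reaches_reroute with x w'; [exact Hto | rewrite dist_refl; lra |].
    rewrite dist_sym. lra.
  - apply reaches_mono with (e / 2 + Rmin eta (e / 2) + 0); [lra |].
    apply reaches_reroute with w' x; [exact Hfrom | left; apply Hcont; lra |].
    rewrite dist_refl. lra.
Qed.

Lemma chain_class_radius x delta w : 0 < delta -> exists r, 0 < r /\
  ((forall w', d w w' < r -> ~ linked r x w') \/
   (chain_equiv x w /\ forall w', d w w' < r -> d (f w) (f w') < delta /\ d w w' < delta)).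
Proof.
  intros Hdel. destruct (classic (chain_equiv x w)) as [Hequiv | Hnequiv].
  - destruct (Hf w delta Hdel) as (eta & Heta & Hcont).
    pose proof (Rmin_l eta delta). pose proof (Rmin_r eta delta).
    exists (Rmin eta delta). split; [apply Rmin_pos; lra |].
    right. split; [exact Hequiv |]. intros w' Hw'. split; [apply Hcont |]; lra.
  - apply not_all_ex_not in Hnequiv. destruct Hnequiv as [e Hne].
    apply imply_to_and in Hne. destruct Hne as [He Hnlinked].
    destruct (linked_stable w e He) as (r & Hr & Hstable).
    exists r. split; [exact Hr |]. left. intros w' Hw' Hlinked.
    exact (Hnlinked (Hstable x w' Hw' Hlinked)).
Qed.

(* [eps] is a Lebesgue number of the cover by the balls of [chain_class_radius]. *)
Lemma linked_near_chain_class x delta : 0 < delta -> exists eps, 0 < eps /\ eps <= delta /\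
  forall w, linked eps x w -> exists z, chain_equiv x z /\ d (f z) (f w) < delta /\ d w z < delta.
Proof.
  intros Hdel.
  pose proof (fun w => chain_class_radius x delta w Hdel) as Hrad.
  apply functional_choice in Hrad. destruct Hrad as [rad Hrad].
  destruct (Hcpt X (fun w y => d w y < rad w)) as [centres Hcentres].
  - intros w y Hy. exists (rad w - d w y). split; [lra |].
    intros y' Hy'. pose proof (dist_triangle w y y'). lra.
  - intros w. exists w. rewrite dist_refl. apply Hrad.
  - destruct (finite_min_pos rad centres delta Hdel) as (eps & Heps & Hepsdel & Hepsrad).
    { intros w. apply Hrad. }
    exists eps. split; [exact Heps | split; [exact Hepsdel |]].
    intros w Hlinked. destruct (Hcentres w) as (c & Hc & Hcw).
    specialize (Hepsrad c Hc).
    destruct (Hrad c) as [_ [Hmiss | [Hequiv Hsmall]]].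
    + exfalso. apply (Hmiss w Hcw). eapply linked_mono; eauto.
    + exists c. rewrite (dist_sym w c). split; [exact Hequiv | apply Hsmall, Hcw].
Qed.

Lemma linked_along_cycle e k xs x :
  (1 <= k)%nat -> delta_chain d f e k xs -> xs 0%nat = x -> xs k = x ->
  forall i, (i <= k)%nat -> linked e x (xs i).
Proof.
  intros Hk Hxs H0 Hend i Hi.
  assert (Hcycle : reaches e x x) by (exists k, xs; auto).
  split.
  - destruct (Nat.eq_dec i 0) as [-> | Hi0]; [rewrite H0; exact Hcycle |].
    rewrite <- H0. apply reaches_from_chain with k; [exact Hxs | lia].
  - destruct (Nat.eq_dec i k) as [-> | Hik]; [rewrite Hend; exact Hcycle |].
    rewrite <- Hend. apply reaches_along_chain; [exact Hxs | lia].
Qed.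

Definition CR_chain (e : R) (k : nat) (xs : nat -> X) (a b : X) : Prop :=
  delta_chain d f e k xs /\ (forall i, (i <= k)%nat -> CR d f (xs i)) /\
  xs 0%nat = a /\ xs k = b.

Lemma CR_chain_mono e1 e2 k xs a b :
  e1 <= e2 -> CR_chain e1 k xs a b -> CR_chain e2 k xs a b.
Proof. intros He [Hxs Hrest]. split; [eapply delta_chain_mono; eauto | exact Hrest]. Qed.

Lemma CR_cycle x delta : CR d f x -> 0 < delta ->
  exists k cs, (1 <= k)%nat /\ CR_chain delta k cs x x.
Proof.
  intros Hx Hdel.
  destruct (linked_near_chain_class x (delta / 3)) as (eps & Heps & Hepsdel & Hnear); [lra |].
  destruct (Hx eps Heps) as (k & xs & Hk & Hxs & H0 & Hend).
  assert (Hpick : forall i, exists z, (i <= k)%nat ->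
    chain_equiv x z /\ d (f z) (f (xs i)) < delta / 3 /\ d (xs i) z < delta / 3).
  { intros i. destruct (Compare_dec.le_lt_dec i k) as [Hi | Hi].
    - destruct (Hnear (xs i)) as [z Hz]; [exact (linked_along_cycle _ _ _ _ Hk Hxs H0 Hend i Hi) |].
      exists z. intros _. exact Hz.
    - exists x. intros. lia. }
  apply functional_choice in Hpick. destruct Hpick as [zs Hzs].
  set (cs := reroute k x x zs).
  assert (Hclose : forall i, (i <= k)%nat ->
    chain_equiv x (cs i) /\ d (f (cs i)) (f (xs i)) <= delta / 3 /\ d (xs i) (cs i) <= delta / 3).
  { assert (Hxx : chain_equiv x x) by (intros e He; split; apply (Hx e He)).
    intros i Hi. unfold cs.
    destruct (Nat.eq_dec i 0) as [-> | Hi0].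
    { rewrite reroute_0, H0, !dist_refl. split; [exact Hxx | split; lra]. }
    destruct (Nat.eq_dec i k) as [-> | Hik].
    { rewrite reroute_end, Hend, !dist_refl by exact Hk. split; [exact Hxx | split; lra]. }
    rewrite reroute_mid by assumption. destruct (Hzs i Hi) as (Hz & Hfz & Hdz).
    split; [exact Hz | split; lra]. }
  exists k, cs. split; [exact Hk |]. split; [| split; [| split]].
  - apply delta_chain_mono with (delta / 3 + eps + delta / 3); [lra |].
    apply delta_chain_perturb with xs; [exact Hxs | |]; intros i Hi; apply Hclose; lia.
  - intros i Hi. apply chain_equiv_CR with x. apply Hclose, Hi.
  - apply reroute_0.
  - apply reroute_end, Hk.
Qed.

Lemma CR_chain_cat e k1 k2 xs ys a b c :
  CR_chain e k1 xs a b -> CR_chain e k2 ys b c -> CR_chain e (k1 + k2) (chain_cat k1 xs ys) a c.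
Proof.
  intros (Hxs & HCx & Hx0 & Hxend) (Hys & HCy & Hy0 & Hyend). split; [| split; [| split]].
  - apply delta_chain_cat; [assumption | assumption | congruence].
  - intros i Hi. destruct (Nat.le_gt_cases i k1).
    + rewrite chain_cat_l by assumption. auto.
    + rewrite chain_cat_r by assumption. apply HCy. lia.
  - rewrite chain_cat_l by lia. exact Hx0.
  - rewrite chain_cat_end by congruence. exact Hyend.
Qed.

Lemma CR_chain_iter e k cs x n : CR_chain e k cs x x -> exists ys, CR_chain e (k * n) ys x x.
Proof.
  intros Hcs. induction n as [| n [ys IH]].
  - rewrite Nat.mul_0_r. exists (fun _ => x). destruct Hcs as (_ & HC & H0 & _).
    split; [intros i Hi; lia | split; [| split; reflexivity]].
    intros i _. rewrite <- H0. apply HC. lia.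
  - rewrite Nat.mul_succ_r. eexists. eapply CR_chain_cat; eauto.
Qed.

Lemma CR_chain_reroute e1 e e2 k xs a b a' b' :
  (1 <= k)%nat -> CR_chain e k xs a' b' -> CR d f a -> CR d f b ->
  d (f a) (f a') <= e1 -> d b' b <= e2 -> CR_chain (e1 + e + e2) k (reroute k a b xs) a b.
Proof.
  intros Hk (Hxs & HC & H0 & Hend) Ha Hb Ha' Hb'. split; [| split; [| split]].
  - subst a' b'. apply delta_chain_reroute; assumption.
  - intros i Hi. unfold reroute.
    destruct (Nat.eqb i 0); [exact Ha |]. destruct (Nat.eqb i k); [exact Hb | auto].
  - apply reroute_0.
  - apply reroute_end, Hk.
Qed.

Definition advance (k : nat) (a : X) (xs : nat -> X) : nat -> X :=
  fun i => if Nat.eqb i 0 then f a else if Nat.ltb i k then xs (S i) else f (xs k).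

Lemma advance_0 k a xs : advance k a xs 0%nat = f a.
Proof. reflexivity. Qed.

Lemma advance_end k a xs : (1 <= k)%nat -> advance k a xs k = f (xs k).
Proof.
  intros Hk. unfold advance. destruct (Nat.eqb_spec k 0); [lia |]. now rewrite Nat.ltb_irrefl.
Qed.

(* [(a, x_1, ..., x_k)] becomes [(f a, x_2, ..., x_k, f x_k)]: only the first jump changes, and
   continuity of [f] at [f a] bounds it. *)
Lemma delta_chain_advance a delta : 0 < delta -> exists e, 0 < e /\
  forall k xs, (1 <= k)%nat -> delta_chain d f e k xs -> xs 0%nat = a ->
    delta_chain d f delta k (advance k a xs).
Proof.
  intros Hdel. destruct (Hf (f a) (delta / 2)) as (eta & Heta & Hcont); [lra |].
  set (e := Rmin (eta / 2) (delta / 2)).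
  assert (He : 0 < e) by (apply Rmin_pos; lra).
  assert (Heeta : e <= eta / 2) by apply Rmin_l.
  assert (Hedel : e <= delta / 2) by apply Rmin_r.
  exists e. split; [exact He |]. intros k xs Hk Hxs H0 i Hi.
  assert (Htail : forall j, (j < k)%nat ->
    d (f (xs (S j))) (if Nat.ltb (S j) k then xs (S (S j)) else f (xs k)) <= e).
  { intros j Hj. destruct (Nat.ltb_spec (S j) k); [apply Hxs; lia |].
    replace (S j) with k by lia. rewrite dist_refl. lra. }
  unfold advance. destruct (Nat.eqb_spec (S i) 0); [lia |].
  destruct (Nat.eqb_spec i 0) as [-> | Hi0].
  - assert (Hfirst : d (f (f a)) (f (xs 1%nat)) < delta / 2).
    { apply Hcont. rewrite <- H0. pose proof (Hxs 0%nat Hk). lra. }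
    pose proof (Htail 0%nat Hk).
    pose proof (dist_triangle (f (f a)) (f (xs 1%nat))
                  (if Nat.ltb 1 k then xs 2%nat else f (xs k))).
    lra.
  - destruct (Nat.ltb_spec i k); [| lia]. pose proof (Htail i Hi). lra.
Qed.

Lemma CR_image a : CR d f a -> CR d f (f a).
Proof.
  intros Ha delta Hdel. destruct (delta_chain_advance a delta Hdel) as (e & He & Hadv).
  destruct (Ha e He) as (k & xs & Hk & Hxs & H0 & Hend).
  exists k, (advance k a xs). repeat split; auto using advance_0.
  rewrite advance_end, Hend by exact Hk. reflexivity.
Qed.

Lemma CR_chain_advance a delta : 0 < delta -> exists e, 0 < e /\
  forall k xs b, (1 <= k)%nat -> CR_chain e k xs a b ->
    CR_chain delta k (advance k a xs) (f a) (f b).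
Proof.
  intros Hdel. destruct (delta_chain_advance a delta Hdel) as (e & He & Hadv).
  exists e. split; [exact He |]. intros k xs b Hk (Hxs & HC & H0 & Hend).
  split; [| split; [| split]].
  - apply Hadv; assumption.
  - intros i Hi. unfold advance. destruct (Nat.eqb_spec i 0) as [-> | _].
    + apply CR_image. rewrite <- H0. apply HC. lia.
    + destruct (Nat.ltb_spec i k); [apply HC; lia | apply CR_image, HC; lia].
  - apply advance_0.
  - rewrite advance_end by exact Hk. congruence.
Qed.

Definition two_way_CR_chains (e : R) (m N : nat) (x y : X) : Prop :=
  forall n, (N <= n)%nat ->
    (exists xs, CR_chain e (m * n) xs x y) /\ (exists ys, CR_chain e (m * n) ys y x).

Lemma simE x y : sim d f x y <-> CR d f x /\ CR d f y /\
  forall e, 0 < e -> exists m N, (0 < m)%nat /\ (0 < N)%nat /\ two_way_CR_chains e m N x y.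
Proof.
  split; intros (Hx & Hy & Hchains); (split; [exact Hx | split; [exact Hy |]]);
    intros e He; destruct (Hchains e He) as (m & N & Hm & HN & Hn);
    exists m, N; (split; [exact Hm | split; [exact HN |]]); intros n HNn.
  - destruct (Hn n HNn) as (xs & ys & Hxs & Hys & HCx & HCy & Hx0 & Hyend & Hxend & Hy0).
    split; [exists xs | exists ys]; repeat split; assumption.
  - destruct (Hn n HNn) as [(xs & Hxs & HCx & Hx0 & Hxend) (ys & Hys & HCy & Hy0 & Hyend)].
    exists xs, ys. repeat split; assumption.
Qed.

Lemma sim_refl x : CR d f x -> sim d f x x.
Proof.
  intros Hx. apply simE. split; [exact Hx | split; [exact Hx |]]. intros e He.
  destruct (CR_cycle x e Hx He) as (k & cs & Hk & Hcs).
  exists k, 1%nat. split; [lia | split; [lia |]]. intros n _.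
  destruct (CR_chain_iter e k cs x n Hcs) as [ys Hys]. split; exists ys; exact Hys.
Qed.

Lemma sim_sym x y : sim d f x y -> sim d f y x.
Proof.
  intros Hxy. apply simE in Hxy. apply simE. destruct Hxy as (Hx & Hy & Hchains).
  split; [exact Hy | split; [exact Hx |]]. intros e He.
  destruct (Hchains e He) as (m & N & Hm & HN & Hn).
  exists m, N. split; [exact Hm | split; [exact HN |]].
  intros n HNn. destruct (Hn n HNn) as [Hto Hfrom]. split; assumption.
Qed.

(* Chains of lengths [m1 (m2 n)] and [m2 (m1 n)] are glued, giving period [2 m1 m2]. *)
Lemma sim_trans x y z : sim d f x y -> sim d f y z -> sim d f x z.
Proof.
  intros Hxy Hyz. apply simE in Hxy, Hyz. apply simE.
  destruct Hxy as (Hx & _ & Hxy). destruct Hyz as (_ & Hz & Hyz).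
  split; [exact Hx | split; [exact Hz |]]. intros e He.
  destruct (Hxy e He) as (m1 & N1 & Hm1 & HN1 & Hn1).
  destruct (Hyz e He) as (m2 & N2 & Hm2 & HN2 & Hn2).
  exists (m1 * m2 + m2 * m1)%nat, (N1 + N2)%nat. split; [nia | split; [lia |]].
  intros n Hn.
  destruct (Hn1 (m2 * n)%nat) as [(xs1 & Hxs1) (ys1 & Hys1)]; [nia |].
  destruct (Hn2 (m1 * n)%nat) as [(xs2 & Hxs2) (ys2 & Hys2)]; [nia |].
  split.
  - replace ((m1 * m2 + m2 * m1) * n)%nat with (m1 * (m2 * n) + m2 * (m1 * n))%nat by ring.
    eexists. eapply CR_chain_cat; eauto.
  - replace ((m1 * m2 + m2 * m1) * n)%nat with (m2 * (m1 * n) + m1 * (m2 * n))%nat by ring.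
    eexists. eapply CR_chain_cat; eauto.
Qed.

Lemma sim_closed x y : CR d f x -> CR d f y ->
  (forall eps, 0 < eps -> exists x' y', sim d f x' y' /\ d x x' < eps /\ d y y' < eps) ->
  sim d f x y.
Proof.
  intros Hx Hy Happrox. apply simE. split; [exact Hx | split; [exact Hy |]]. intros e He.
  destruct (Hf x (e / 3)) as (eta1 & Heta1 & Hcont1); [lra |].
  destruct (Hf y (e / 3)) as (eta2 & Heta2 & Hcont2); [lra |].
  set (eps := Rmin eta1 (Rmin eta2 (e / 3))).
  assert (Heps : 0 < eps) by (apply Rmin_pos; [| apply Rmin_pos]; lra).
  assert (Heps1 : eps <= eta1) by apply Rmin_l.
  assert (Heps2 : eps <= eta2) by (eapply Rle_trans; [apply Rmin_r | apply Rmin_l]).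
  assert (Heps3 : eps <= e / 3) by (eapply Rle_trans; [apply Rmin_r | apply Rmin_r]).
  destruct (Happrox eps Heps) as (x' & y' & Hx'y' & Hxx' & Hyy').
  apply simE in Hx'y'. destruct Hx'y' as (_ & _ & Hchains).
  destruct (Hchains (e / 3)) as (m & N & Hm & HN & Hn); [lra |].
  exists m, N. split; [exact Hm | split; [exact HN |]]. intros n HNn.
  destruct (Hn n HNn) as [(xs & Hxs) (ys & Hys)].
  assert (Hk : (1 <= m * n)%nat) by nia.
  split; [exists (reroute (m * n) x y xs) | exists (reroute (m * n) y x ys)];
    apply CR_chain_mono with (e / 3 + e / 3 + e / 3); try lra;
    eapply CR_chain_reroute; eauto; try (left; apply Hcont1 || apply Hcont2; lra);
    rewrite dist_sym; lra.
Qed.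

Lemma sim_image x y : sim d f x y -> sim d f (f x) (f y).
Proof.
  intros Hxy. apply simE in Hxy. apply simE. destruct Hxy as (Hx & Hy & Hchains).
  split; [apply CR_image, Hx | split; [apply CR_image, Hy |]]. intros e He.
  destruct (CR_chain_advance x e He) as (e1 & He1 & Hadv1).
  destruct (CR_chain_advance y e He) as (e2 & He2 & Hadv2).
  destruct (Hchains (Rmin e1 e2)) as (m & N & Hm & HN & Hn); [apply Rmin_pos; assumption |].
  exists m, N. split; [exact Hm | split; [exact HN |]]. intros n HNn.
  destruct (Hn n HNn) as [(xs & Hxs) (ys & Hys)].
  assert (Hk : (1 <= m * n)%nat) by nia.
  split; eexists; [apply Hadv1 | apply Hadv2]; try exact Hk;
    eapply CR_chain_mono; eauto; [apply Rmin_l | apply Rmin_r].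
Qed.

End ChainRecurrence.

Theorem lemma3p1 (X : Type) (d : X -> X -> R) (f : X -> X)
  (Hd : is_metric d) (Hcpt : is_compact d) (Hf : is_continuous d f) :
  (* ~ is an equivalence relation on CR(f) *)
  ((forall x, CR d f x -> sim d f x x) /\
   (forall x y, sim d f x y -> sim d f y x) /\
   (forall x y z, sim d f x y -> sim d f y z -> sim d f x z)) /\
  (* R is closed in CR(f)^2 (contains all its limit points in CR(f)^2,
     product topology given by the max metric) *)
  (forall x y, CR d f x -> CR d f y ->
     (forall eps, 0 < eps -> exists x' y', sim d f x' y' /\ d x x' < eps /\ d y y' < eps) ->
     sim d f x y) /\
  (* (f x f)(R) is contained in R *)
  (forall x y, sim d f x y -> sim d f (f x) (f y)).
Proof.
  split; [split; [| split] | split].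
  - exact (sim_refl X d f Hd Hf Hcpt).
  - exact (sim_sym X d f).
  - exact (sim_trans X d f).
  - exact (sim_closed X d f Hd Hf).
  - exact (sim_image X d f Hd Hf).
Qed.
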